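(* Let $p:\mathcal P\to[1,\infty]$ be measurable, let $E\subset\mathcal P$ be measurable with $\mu(E)<\infty$, and let $E_n=\{x\in E:p(x)>n\}$, $n=1,2,\dots$. Then $$e^{p(\cdot)}\in\bigcap_{q\in[1,\infty)}L^q(E)\quad\iff\quad\|\chi_{E_n}\|_{L^{p(\cdot)}(E)}\to0\ \text{ as } n\to\infty.$$ Moreover, if $\|e^{p(\cdot)}\|_{L^{q_0}(E)}=\infty$ for some $q_0\in[1,\infty)$, then $\|\chi_{E_n}\|_{L^{p(\cdot)}(E)}\ge e^{-q_0}$ for every $n=1,2,\dots$.
   Context: $(\mathcal P,\mu)$ is a measure space (in the paper, a metric space with a positive complete Borel measure). For measurable $E$ and $p:E\to[1,\infty]$, the Luxemburg norm is $\|f\|_{L^{p(\cdot)}(E)}=\inf\{\lambda>0:\int_E(|f(x)|/\lambda)^{p(x)}\,d\mu(x)\le1\}$, with the convention $a^\infty=0$ for $0\le a<1$, $1^\infty=1$, and $a^\infty=\infty$ for $a>1$. *)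

From HB Require Import structures.
From mathcomp Require Import all_boot all_order all_algebra.
From mathcomp Require Import all_classical all_reals all_analysis measurable_realfun.
Set Implicit Arguments. Unset Strict Implicit. Unset Printing Implicit Defensive.
Import Order.TTheory GRing.Theory Num.Theory.
Local Open Scope classical_set_scope.
Local Open Scope ring_scope.

(* a^q for a >= 0 real and q : \bar R exponent, with the convention
   a^oo = 0 if a < 1, 1^oo = 1, a^oo = oo if a > 1.  (q = -oo never occurs,
   since exponents take values in [1, oo]; we set it to 0.) *)
Definition vpow {R : realType} (a : R) (q : \bar R) : \bar R :=
  match q with
  | r%:E => (a `^ r)%:E
  | +oo%E => if a < 1 then 0%E else if a == 1 then 1%E else +oo%E
  | -oo%E => 0%E
  end.

Definition vmodular {d} {T : measurableType d} {R : realType}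
  (mu : {measure set T -> \bar R}) (E : set T) (p : T -> \bar R) (f : T -> R) : \bar R :=
  (\int[mu]_(x in E) vpow `|f x| (p x))%E.

(* Luxemburg norm ||f||_{L^{p(.)}(E)} = inf {lambda > 0 : rho(f/lambda) <= 1}
   (inf of the empty set = +oo) *)
Definition luxemburg_norm {d} {T : measurableType d} {R : realType}
  (mu : {measure set T -> \bar R}) (E : set T) (p : T -> \bar R) (f : T -> R) : \bar R :=
  ereal_inf [set l%:E | l in [set l : R | 0 < l /\
     (vmodular mu E p (fun x => (f x / l)%R) <= 1)%E]].

Definition eLq_norm {d} {T : measurableType d} {R : realType}
  (mu : {measure set T -> \bar R}) (E : set T) (g : T -> \bar R) (q : R) : \bar R :=
  poweR (\int[mu]_(x in E) poweR `|g x|%E q)%E q^-1.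

Definition in_eLq {d} {T : measurableType d} {R : realType}
  (mu : {measure set T -> \bar R}) (E : set T) (g : T -> \bar R) (q : R) : Prop :=
  measurable_fun E g /\ (eLq_norm mu E g q < +oo)%E.

From HB Require Import structures.
From mathcomp Require Import all_boot all_order all_algebra.
From mathcomp Require Import all_classical all_reals all_analysis measurable_realfun.
Set Implicit Arguments. Unset Strict Implicit. Unset Printing Implicit Defensive.
Import Order.TTheory GRing.Theory Num.Theory.
Local Open Scope classical_set_scope.
Local Open Scope ring_scope.

(* If [||chi_{E_n}|| < e^{-q}], some admissible [l < e^{-q}] gives
   [int_{E_n} (1/l)^p <= 1] with [1/l > e^q]; since [p <= n] off [E_n], this
   bounds [int_E e^{q p}] by [1 + e^{q n} mu(E)].  Conversely, if
   [I = int_E e^{(q+1) p}] is finite then [e^{-q}] is admissible for every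
   [n >= I], because [int_{E_n} e^{q p} <= e^{-n} I <= 1]. *)

Lemma measurable_expeR (R : realType) : measurable_fun [set: \bar R] (@expeR R).
Proof.
have -> : @expeR R = (fun x => if x == +oo%E then +oo%E else
   if x == -oo%E then 0%E else (expR (fine x))%:E).
  by apply/funext => -[r| |].
apply: measurable_fun_ifT => //=; first exact: measurable_fun_eqe.
apply: measurable_fun_ifT => //=; first exact: measurable_fun_eqe.
apply/measurable_EFinP => //=.
exact: measurableT_comp (@measurable_expR R) _.
Qed.

Lemma vpow_gt1 (R : realType) (c : R) (y : \bar R) : 1 < c ->
  vpow c y = expeR (y * (ln c)%:E).
Proof.
move=> c_gt1; have ln_gt0 : 0 < ln c by rewrite ln_gt0.
case: y => [r| |] /=.
- by rewrite /powR gt_eqF ?(lt_trans _ c_gt1) // mulrC.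
- by rewrite ltNge (ltW c_gt1) gt_eqF // mulyr gtr0_sg // mul1e.
- by rewrite mulNyr gtr0_sg // mul1e.
Qed.

Lemma vpow0 (R : realType) (y : \bar R) : y != 0%E -> vpow 0 y = 0%E.
Proof. by case: y => [r| |] //= r_neq0; [rewrite powR0|rewrite ltr01]. Qed.

Lemma poweR_expeR (R : realType) (y : \bar R) (q : R) : 0 < q ->
  (expeR y `^ q)%E = expeR (q%:E * y).
Proof.
move=> q_gt0; case: y => [r| |].
- by rewrite [expeR _]/= poweR_EFin -expRM mulrC.
- by rewrite [expeR _]/= poweRyr ?gt_eqF // mulry gtr0_sg // mul1e.
- by rewrite [expeR _]/= poweR0r ?gt_eqF // mulrNy gtr0_sg // mul1e.
Qed.

Lemma luxemburg_norm_ge0 d (T : measurableType d) (R : realType)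
    (mu : {measure set T -> \bar R}) (E : set T) (p : T -> \bar R) (f : T -> R) :
  (0 <= luxemburg_norm mu E p f)%E.
Proof. by apply: le_ereal_inf_tmp => _ [l [l_gt0 _] <-]; rewrite lee_fin ltW. Qed.

Lemma eLq_norm_expeR d (T : measurableType d) (R : realType)
    (mu : {measure set T -> \bar R}) (E : set T) (g : T -> \bar R) (q : R) : 0 < q ->
  eLq_norm mu E (fun x => expeR (g x)) q =
  ((\int[mu]_(x in E) expeR (q%:E * g x)) `^ q^-1)%E.
Proof.
move=> q_gt0; congr (_ `^ _)%E; apply: eq_integral => x _.
by rewrite gee0_abs ?expeR_ge0 // poweR_expeR.
Qed.

Lemma eLq_norm_expeR_lty d (T : measurableType d) (R : realType)
    (mu : {measure set T -> \bar R}) (E : set T) (g : T -> \bar R) (q : R) : 0 < q ->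
  (eLq_norm mu E (fun x => expeR (g x)) q < +oo)%E <->
  (\int[mu]_(x in E) expeR (q%:E * g x) < +oo)%E.
Proof.
move=> q_gt0; rewrite eLq_norm_expeR //; split; last exact: poweR_lty.
by apply: lty_poweRy; rewrite invr_eq0 gt_eqF.
Qed.

Lemma cvge0_nneg {T : Type} {F : set_system T} {FF : Filter F} (R : realType)
    (u : T -> \bar R) :
  (forall t, 0 <= u t)%E ->
  (forall e : R, 0 < e -> \forall t \near F, (u t <= e%:E)%E) ->
  u @ F --> 0%E.
Proof.
move=> u_ge0 u_small; apply/fine_cvgP; split.
  apply: filterS (u_small 1 ltr01) => t ut_le1.
  by rewrite ge0_fin_numE // (le_lt_trans ut_le1) ?ltry.
apply/cvgrPdist_le => e e_gt0; apply: filterS (u_small e e_gt0) => t ut_le /=.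
have ut_fin : u t \is a fin_num by rewrite ge0_fin_numE // (le_lt_trans ut_le) ?ltry.
by rewrite sub0r normrN ger0_norm ?fine_ge0 // -lee_fin fineK.
Qed.

Section exponent_tail.
Context d (T : measurableType d) (R : realType) (mu : {measure set T -> \bar R})
  (p : T -> \bar R) (E : set T).
Hypothesis mp : measurable_fun setT p.
Hypothesis p_ge1 : forall x, (1 <= p x)%E.
Hypothesis mE : measurable E.
Hypothesis muE_lty : (mu E < +oo)%E.
Let En (n : nat) := [set x | E x /\ ((n%:R)%:E < p x)%E].

Let mpE : measurable_fun E p. Proof. exact: measurable_funS mp. Qed.

Let mEn n : measurable (En n).
Proof. exact: (measurable_lte mE (measurable_cst _) mpE). Qed.

Let mexpeR_pM (a : R) : measurable_fun E (fun x => expeR (a%:E * p x)).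
Proof. exact: measurableT_comp (@measurable_expeR R) (measurable_funeM _ mpE). Qed.

Let mexpeR_pM_indic (a : R) {A : set T} : measurable A ->
  measurable_fun E (fun x => expeR (a%:E * p x) * (\1_A x)%:E)%E.
Proof.
move=> mA; apply: emeasurable_funM; first exact: mexpeR_pM.
exact/measurable_EFinP/measurable_indic.
Qed.

Let expeR_pM_indic_ge0 (a : R) (A : set T) (x : T) :
  (0 <= expeR (a%:E * p x) * (\1_A x)%:E)%E.
Proof. by rewrite mule_ge0 ?expeR_ge0 // lee_fin indicE ler0n. Qed.

Lemma vmodular_indic_div (A : set T) (l : R) : 0 < l < 1 ->
  vmodular mu E p (fun x => \1_A x / l) =
  (\int[mu]_(x in E) (expeR ((ln l^-1)%:E * p x) * (\1_A x)%:E))%E.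
Proof.
move=> /andP[l_gt0 l_lt1]; apply: eq_integral => x _.
rewrite /indic; case: (x \in A).
  rewrite mul1r ger0_norm ?invr_ge0 ?ltW // vpow_gt1 ?invf_gt1 //.
  by rewrite mule1 muleC.
by rewrite mul0r normr0 vpow0 ?mule0 // gt_eqF // (lt_le_trans _ (p_ge1 x)).
Qed.

Lemma expeR_pM_le_tail (a c : R) (n : nat) (x : T) : E x -> 0 <= a -> a <= c ->
  (expeR (a%:E * p x) <= expeR (c%:E * p x) * (\1_(En n) x)%:E + (expR (a * n%:R))%:E)%E.
Proof.
move=> Ex a_ge0 a_le_c; rewrite /indic; case: (boolP (x \in En n)) => xEn.
  rewrite mule1 lee_paddr ?lee_fin ?expR_ge0 // lee_expeR lee_wpmul2r ?lee_fin //.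
  exact: le_trans (p_ge1 x).
have p_le_n : (p x <= n%:R%:E)%E.
  by rewrite leNgt; apply: contraNN xEn => lt_n; rewrite inE.
rewrite mule0 add0e; move: (p_ge1 x) p_le_n; case: (p x) => [r| |] //= _.
by rewrite !lee_fin ler_expR => r_le_n; exact: (ler_wpM2l a_ge0 r_le_n).
Qed.

Lemma expeR_pM_indic_le (a : R) (n : nat) (x : T) : 0 < a ->
  (expeR (a%:E * p x) * (\1_(En n) x)%:E <=
   (expR (- n%:R))%:E * expeR ((a + 1)%:E * p x))%E.
Proof.
move=> a_gt0; rewrite /indic; case: (boolP (x \in En n)) => xEn; last first.
  by rewrite mule0 mule_ge0 ?lee_fin ?expR_ge0 ?expeR_ge0.
move: xEn; rewrite inE => -[_]; rewrite mule1; case: (p x) => [s| |] // n_lt_s.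
  rewrite -!EFinM /expeR lee_fin -expRD ler_expR mulrDl mul1r addrCA lerDl.
  by rewrite addrC subr_ge0; move: n_lt_s; rewrite lte_fin => /ltW.
have a1_gt0 : 0 < a + 1 by rewrite addr_gt0.
by rewrite !gt0_muley ?lte_fin // /expeR gt0_muley ?lte_fin ?expR_gt0.
Qed.

Lemma integral_expeR_pM_lty (q : R) (n : nat) : 0 < q ->
  (luxemburg_norm mu E p (\1_(En n) : T -> R) < (expR (- q))%:E)%E ->
  (\int[mu]_(x in E) expeR (q%:E * p x) < +oo)%E.
Proof.
move=> q_gt0 /ereal_inf_lt[_ [l [l_gt0 modular_le1] <-]]; rewrite lte_fin => l_lt.
have l_lt1 : l < 1 by rewrite (lt_trans l_lt) // expR_lt1 oppr_lt0.
have q_lt : q < ln l^-1 by rewrite lnV ?posrE // ltrNr -ltr_expR lnK ?posrE.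
rewrite vmodular_indic_div ?l_gt0 // in modular_le1.
apply: le_lt_trans (ge0_le_integral mu mE _ (mexpeR_pM q) _
  (fun x Ex => expeR_pM_le_tail n Ex (ltW q_gt0) (ltW q_lt))) _.
- by move=> x _; exact: expeR_ge0.
- exact/emeasurable_funD/measurable_cst/mexpeR_pM_indic.
rewrite ge0_integralD //; last exact: mexpeR_pM_indic.
rewrite integral_cst // lte_add_pinfty //; first exact: le_lt_trans modular_le1 (ltry _).
by rewrite lte_mul_pinfty // lee_fin expR_ge0.
Qed.

Lemma luxemburg_norm_indic_le (q : R) : 0 < q ->
  (\int[mu]_(x in E) expeR ((q + 1)%:E * p x) < +oo)%E ->
  \forall n \near \oo,
    (luxemburg_norm mu E p (\1_(En n) : T -> R) <= (expR (- q))%:E)%E.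
Proof.
move=> q_gt0 I_lty; set I := (\int[mu]_(x in E) _)%E in I_lty.
have I_ge0 : (0 <= I)%E by apply: integral_ge0 => x _; exact: expeR_ge0.
have [r Ir] : exists r, I = r%:E by exists (fine I); rewrite fineK // ge0_fin_numE.
near=> n.
have expNq_gt0 : 0 < expR (- q) by exact: expR_gt0.
have expNq_lt1 : expR (- q) < 1 by rewrite expR_lt1 oppr_lt0.
apply: ereal_inf_lbound; exists (expR (- q)) => //; split => //.
rewrite vmodular_indic_div ?expNq_gt0 // -expRN opprK expRK.
apply: le_trans (ge0_le_integral mu mE _ (mexpeR_pM_indic q (mEn n)) _
  (fun x _ => expeR_pM_indic_le n x q_gt0)) _.
- by move=> x _; exact: expeR_pM_indic_ge0.
- exact/measurable_funeM/mexpeR_pM.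
rewrite ge0_integralZl ?lee_fin ?expR_ge0 //; last first.
  by move=> x _; exact: expeR_ge0.
rewrite -/I Ir -EFinM lee_fin expRN mulrC ler_pdivrMr ?expR_gt0 // mul1r.
have r_le_n : r <= n%:R by near: n; exact: nbhs_infty_ger.
by rewrite (le_trans r_le_n) // (le_trans _ (expR_ge1Dx _)) ?lerDr.
Unshelve. all: by end_near.
Qed.

End exponent_tail.

Theorem proposition8p1 (d : measure_display) (T : measurableType d) (R : realType)
  (mu : {measure set T -> \bar R}) (p : T -> \bar R) (E : set T)
  (hp : measurable_fun setT p) (hp1 : forall x, (1 <= p x)%E)
  (hE : measurable E) (hmuE : (mu E < +oo)%E) :
  let En := fun n : nat => [set x | E x /\ ((n%:R)%:E < p x)%E] in
  ((forall q : R, 1 <= q -> in_eLq mu E (fun x => expeR (p x)) q) <->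
     ((fun n => luxemburg_norm mu E p (\1_(En n) : T -> R)) @ \oo --> 0%E)) /\
  (forall q0 : R, 1 <= q0 ->
     eLq_norm mu E (fun x => expeR (p x)) q0 = +oo%E ->
     forall n : nat, (0 < n)%N ->
       ((expR (- q0))%:E <= luxemburg_norm mu E p (\1_(En n) : T -> R))%E).
Proof.
move=> En; split; last first.
  move=> q q_ge1 Lq_oo n _; rewrite leNgt; apply/negP => norm_lt.
  have q_gt0 : 0 < q := lt_le_trans ltr01 q_ge1.
  have := integral_expeR_pM_lty hp hp1 hE hmuE q_gt0 norm_lt.
  by rewrite -eLq_norm_expeR_lty // Lq_oo ltxx.
split => [Lq | norm_cvg0 q q_ge1].
- apply: cvge0_nneg => [n|e e_gt0]; first exact: luxemburg_norm_ge0.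
  pose q := Num.max 1 (- ln e).
  have q_gt0 : 0 < q by rewrite lt_max ltr01.
  have [_] : in_eLq mu E (fun x => expeR (p x)) (q + 1).
    by apply: Lq; rewrite lerDr ltW.
  rewrite eLq_norm_expeR_lty ?addr_gt0 // => I_lty.
  apply: filterS (luxemburg_norm_indic_le hp hp1 hE q_gt0 I_lty) => n /le_trans; apply.
  by rewrite lee_fin -[leRHS](lnK e_gt0) ler_expR lerNl le_max lexx orbT.
- have q_gt0 : 0 < q := lt_le_trans ltr01 q_ge1.
  have mpE : measurable_fun E p := measurable_funS measurableT (subsetT E) hp.
  split; first exact: measurableT_comp (@measurable_expeR R) mpE.
  rewrite eLq_norm_expeR_lty //.
  near \oo => n; apply: (integral_expeR_pM_lty hp hp1 hE hmuE q_gt0 (n := n)).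
  near: n; apply: (norm_cvg0 [set y | (y < (expR (- q))%:E)%E]).
  by apply: open_ereal_lt'; rewrite lte_fin expR_gt0.
Unshelve. all: by end_near.
Qed.
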